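(* Let $\mathbb H(t)=4\arctan(e^t)$. If $\Phi\in C^\infty(\mathbb{R}^2;\mathbb{C}^2)$ is parallel with respect to $(\mathbb H(x),i)$ and either $e^{-x/2}\Phi(x,y)\in L^\infty(\mathbb{R}^2)$ or $e^{x/2}\Phi(x,y)\in L^\infty(\mathbb{R}^2)$, then $\Phi$ is a constant complex multiple of a column of $\Phi^{\mathbb H}(x,y,i)$ (the two columns of $\Phi^{\mathbb H}(\cdot,\cdot,i)$ being linearly dependent).
   Context: Pauli matrices $\sigma_1=\begin{pmatrix}0&1\\1&0\end{pmatrix}$, $\sigma_2=\begin{pmatrix}0&-i\\ i&0\end{pmatrix}$, $\sigma_3=\begin{pmatrix}1&0\\0&-1\end{pmatrix}$; $K(\lambda)=\lambda-\lambda^{-1}$, $J(\lambda)=\lambda+\lambda^{-1}$. For $u\in C^\infty(\mathbb{R}^2)$, $\lambda\ne0$: $A=\frac i4\big((\lambda-\lambda^{-1}\cos u)\sigma_3-(\partial_xu-i\partial_yu)\sigma_2-\lambda^{-1}(\sin u)\sigma_1\big)$, $B=\frac14\big(-(\lambda+\lambda^{-1}\cos u)\sigma_3+(\partial_xu-i\partial_yu)\sigma_2-\lambda^{-1}(\sin u)\sigma_1\big)$; $\Phi$ is parallel with respect to $(u,\lambda)$ if $\partial_x\Phi=A\Phi$, $\partial_y\Phi=B\Phi$. $\Phi^0(x,y,\lambda)=\mathrm{diag}(e^{\frac i4K(\lambda)x-\frac14J(\lambda)y},e^{-\frac i4K(\lambda)x+\frac14J(\lambda)y})$ and, for $\lambda\ne0,-i$,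 $\Phi^{\mathbb H}=\Phi^0+\frac{i}{\lambda+i}\big((\tanh x)\sigma_3-(\operatorname{sech}x)\sigma_1-\mathrm{Id}\big)\Phi^0$. *)

From Stdlib Require Import Reals.
From Coquelicot Require Import Coquelicot.

Local Open Scope C_scope.

(* vectors of C^2 and 2x2 complex matrices (row major) *)
Definition cvec := (C * C)%type.
Definition cmat := ((C * C) * (C * C))%type.

Definition mk (a b c d : C) : cmat := ((a, b), (c, d)).
Definition madd (M N : cmat) : cmat :=
  let '((a, b), (c, d)) := M in let '((a', b'), (c', d')) := N in
  ((a + a', b + b'), (c + c', d + d')).
Definition msc (k : C) (M : cmat) : cmat :=
  let '((a, b), (c, d)) := M in ((k * a, k * b), (k * c, k * d)).
Definition mmul (M N : cmat) : cmat :=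
  let '((a, b), (c, d)) := M in let '((a', b'), (c', d')) := N in
  ((a * a' + b * c', a * b' + b * d'), (c * a' + d * c', c * b' + d * d')).
Definition mv (M : cmat) (v : cvec) : cvec :=
  let '((a, b), (c, d)) := M in (a * fst v + b * snd v, c * fst v + d * snd v).
Definition vsc (k : C) (v : cvec) : cvec := (k * fst v, k * snd v).
Definition vadd (v w : cvec) : cvec := (fst v + fst w, snd v + snd w).
(* column j of M : false = first column, true = second column *)
Definition col (j : bool) (M : cmat) : cvec :=
  let '((a, b), (c, d)) := M in if j then (b, d) else (a, c).

Definition sigma1 : cmat := mk 0 1 1 0.
Definition sigma2 : cmat := mk 0 (- Ci) Ci 0.
Definition sigma3 : cmat := mk 1 0 0 (-1).
Definition Id2 : cmat := mk 1 0 0 1.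

Definition Kf (l : C) : C := l - / l.
Definition Jf (l : C) : C := l + / l.

Definition Cexp (z : C) : C :=
  (exp (Re z) * cos (Im z), exp (Re z) * sin (Im z))%R.

Definition tanh (x : R) : R := ((exp x - exp (- x)) / (exp x + exp (- x)))%R.
Definition sech (x : R) : R := (2 / (exp x + exp (- x)))%R.

Definition dx (u : R -> R -> R) (x y : R) : R := Derive (fun t => u t y) x.
Definition dy (u : R -> R -> R) (x y : R) : R := Derive (fun t => u x t) y.

Definition Amat (u : R -> R -> R) (l : C) (x y : R) : cmat :=
  msc (Ci / 4)
    (madd (msc (l - / l * RtoC (cos (u x y))) sigma3)
    (madd (msc (- (RtoC (dx u x y) - Ci * RtoC (dy u x y))) sigma2)
          (msc (- (/ l * RtoC (sin (u x y)))) sigma1))).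

Definition Bmat (u : R -> R -> R) (l : C) (x y : R) : cmat :=
  msc (/ 4)
    (madd (msc (- (l + / l * RtoC (cos (u x y)))) sigma3)
    (madd (msc (RtoC (dx u x y) - Ci * RtoC (dy u x y)) sigma2)
          (msc (- (/ l * RtoC (sin (u x y)))) sigma1))).

Definition parallel (u : R -> R -> R) (l : C) (Phi : R -> R -> cvec) : Prop :=
  forall x y : R,
    is_derive (fun t => Phi t y) x (mv (Amat u l x y) (Phi x y)) /\
    is_derive (fun t => Phi x t) y (mv (Bmat u l x y) (Phi x y)).

Definition Phi0 (l : C) (x y : R) : cmat :=
  mk (Cexp (Ci / 4 * Kf l * RtoC x - / 4 * Jf l * RtoC y)) 0
     0 (Cexp (- (Ci / 4) * Kf l * RtoC x + / 4 * Jf l * RtoC y)).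

Definition PhiH (l : C) (x y : R) : cmat :=
  madd (Phi0 l x y)
       (mmul (msc (Ci / (l + Ci))
                  (madd (msc (RtoC (tanh x)) sigma3)
                  (madd (msc (- RtoC (sech x)) sigma1) (msc (-1) Id2))))
             (Phi0 l x y)).

Definition Hk (t : R) : R := (4 * atan (exp t))%R.

Fixpoint Ck (k : nat) (f : R -> R -> C) : Prop :=
  match k with
  | O => forall p : R * R, continuous (fun q : R * R => f (fst q) (snd q)) p
  | S k' => exists fx fy : R -> R -> C,
      (forall x y, is_derive (fun t => f t y) x (fx x y)) /\
      (forall x y, is_derive (fun t => f x t) y (fy x y)) /\
      Ck k' fx /\ Ck k' fy
  end.
Definition smooth (f : R -> R -> C) : Prop := forall k, Ck k f.
Definition smooth2 (Phi : R -> R -> cvec) : Prop :=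
  smooth (fun x y => fst (Phi x y)) /\ smooth (fun x y => snd (Phi x y)).

Definition Linf2 (g : R -> R -> cvec) : Prop :=
  exists M : R, forall x y : R,
    (Cmod (fst (g x y)) <= M /\ Cmod (snd (g x y)) <= M)%R.

(* With t = e^x and Phi = (v1, v2) the connection is explicit:
   - the y-equation involves only w = v1 + t v2: dw/dy = 0 and dv2/dy = k(x) w
     with k(x) <> 0, so v2 is affine in y; the growth hypothesis bounds every
     slice y |-> Phi(x, y), which forces w = 0 and v2 independent of y;
   - with v1 = -t v2, the second row of the x-equation is a scalar linear ODE
     with integrating factor m(x) = e^{3x/2} + e^{-x/2}: m v2 is constant.
   Both columns of Phi^H(., ., i) equal +-(e^x, -1)/m(x), which gives the
   claim and the linear dependence of the columns. *)

From Pilot Require Import Defs.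
From Stdlib Require Import Reals Lra.
From Coquelicot Require Import Coquelicot.

(* C and C^2 viewed as normed real vector spaces: the structures Coquelicot
   infers for derivatives of functions R -> C and R -> C * C. *)
Local Notation CR := (prod_NormedModule R_AbsRing R_NormedModule R_NormedModule).
Local Notation CC := (prod_NormedModule R_AbsRing CR CR).

Ltac C_ext :=
  apply injective_projections; simpl;
  repeat (unfold zero, one, plus, opp, minus, scal, mult; simpl);
  repeat (unfold prod_scal, prod_plus, prod_opp, prod_zero; simpl).

Lemma is_derive_linear {V W : NormedModule R_AbsRing} (L : V -> W)
    (f : R -> V) (x : R) (d : V) :
  is_linear L -> is_derive f x d -> is_derive (fun t => L (f t)) x (L d).
Proof.
  intros HL Hf. unfold is_derive in *.
  apply (filterdiff_ext_lin (U := AbsRing_NormedModule R_AbsRing) _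
           (fun h : R => L (scal h d))).
  - apply (filterdiff_comp' f L x (fun h => scal h d) L Hf).
    now apply filterdiff_linear.
  - intros h. exact (linear_scal L HL h d).
Qed.

Lemma is_linear_Rform (k1 k2 : R) :
  is_linear (U := CR) (V := R_NormedModule) (fun z => k1 * fst z + k2 * snd z).
Proof.
  assert (Hscal : forall k, is_linear (U := R_NormedModule) (V := R_NormedModule)
                              (fun r => k * r)).
  { intros k. apply (is_linear_scal_r (K := R_AbsRing) (V := R_NormedModule) k).
    intros; apply Rmult_comm. }
  apply (is_linear_comp (fun z : CR => (k1 * fst z, k2 * snd z))
           (fun p : R_NormedModule * R_NormedModule => plus (fst p) (snd p))).
  - apply is_linear_prod.
    + apply (is_linear_comp (fun z : CR => fst z) (fun r => k1 * r));
        [apply is_linear_fst | apply Hscal].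
    + apply (is_linear_comp (fun z : CR => snd z) (fun r => k2 * r));
        [apply is_linear_snd | apply Hscal].
  - apply is_linear_plus.
Qed.

Lemma is_linear_Cmult (a : C) : is_linear (U := CR) (V := CR) (fun z => a * z)%C.
Proof.
  eapply is_linear_ext;
    [| apply is_linear_prod;
         [apply (is_linear_Rform (fst a) (- snd a)) |
          apply (is_linear_Rform (snd a) (fst a))]].
  intros [z1 z2]. destruct a as [a1 a2]. C_ext; ring.
Qed.

Lemma is_linear_Ccomb (a b : C) :
  is_linear (U := CC) (V := CR) (fun v => a * fst v + b * snd v)%C.
Proof.
  apply (is_linear_comp (V := prod_NormedModule R_AbsRing CR CR)
           (fun v : CC => ((a * fst v)%C, (b * snd v)%C))
           (fun p => plus (fst p) (snd p))).
  - apply (is_linear_prod (T := CC) (U := CR) (V := CR)).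
    + apply (is_linear_comp (fun v : CC => fst v) (fun z : CR => a * z)%C);
        [apply is_linear_fst | apply is_linear_Cmult].
    + apply (is_linear_comp (fun v : CC => snd v) (fun z : CR => b * z)%C);
        [apply is_linear_snd | apply is_linear_Cmult].
  - eapply is_linear_ext; [| apply is_linear_plus].
    intros [[p1 p2] [q1 q2]]. reflexivity.
Qed.

Lemma is_derive_Ccomb (a b : C) (f : R -> C * C) (x : R) (d : C * C) :
  is_derive (V := CC) f x d ->
  is_derive (V := CR) (fun t => a * fst (f t) + b * snd (f t))%C x
    (a * fst d + b * snd d)%C.
Proof. exact (is_derive_linear _ f x d (is_linear_Ccomb a b)). Qed.

Lemma is_derive_snd (f : R -> C * C) (x : R) (d : C * C) :
  is_derive (V := CC) f x d -> is_derive (V := CR) (fun t => snd (f t)) x (snd d).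
Proof. exact (is_derive_linear (fun v : CC => snd v) f x d is_linear_snd). Qed.

Lemma is_derive_Rscal (f : R -> R) (g : R -> C) (x df : R) (dg : C) :
  is_derive f x df -> is_derive (V := CR) g x dg ->
  is_derive (V := CR) (fun t => RtoC (f t) * g t)%C x
    (RtoC df * g x + RtoC (f x) * dg)%C.
Proof.
  intros Hf Hg.
  assert (Hscal : is_derive (V := CR) (fun t => scal (f t) (g t)) x
                    (plus (scal df (g x)) (scal (f x) dg))).
  { unfold is_derive in *. eapply filterdiff_ext_lin.
    - exact (filterdiff_scal_fct (K := R_AbsRing)
               (U := AbsRing_NormedModule R_AbsRing) (V := CR) x f g _ _
               Rmult_comm Hf Hg).
    - intros h. destruct (g x) as [g1 g2], dg as [d1 d2]. C_ext; ring. }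
  replace (RtoC df * g x + RtoC (f x) * dg)%C
    with (plus (scal df (g x)) (scal (f x) dg) : C).
  - eapply is_derive_ext; [| exact Hscal].
    intros t. C_ext; ring.
  - destruct (g x) as [g1 g2], dg as [d1 d2]. C_ext; ring.
Qed.

Lemma is_derive_eq {V : NormedModule R_AbsRing} (f : R -> V) (x : R) (d d' : V) :
  is_derive f x d -> d = d' -> is_derive f x d'.
Proof. now intros H <-. Qed.

Lemma zero_derive_const {V : NormedModule R_AbsRing} (f : R -> V) :
  (forall t, is_derive f t zero) -> forall a b, f a = f b.
Proof.
  intros H a b. destruct (Rtotal_order a b) as [h | [h | h]].
  - apply eq_is_derive; auto.
  - now subst.
  - symmetry; apply eq_is_derive; auto.
Qed.

Lemma const_derive_affine (f : R -> C) (K : C) :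
  (forall t, is_derive (V := CR) f t K) -> forall t, f t = (f 0 + RtoC t * K)%C.
Proof.
  intros Hf.
  set (g := fun t => (f t - RtoC t * K)%C).
  assert (Hg : forall t, is_derive (V := CR) g t zero).
  { intros t. apply (is_derive_eq _ _ (minus (K : CR) (scal (one : R_AbsRing) (K : CR)))).
    - eapply is_derive_ext;
        [| apply (is_derive_minus (V := CR) f (fun s => scal s K));
             [apply Hf | exact (is_derive_scal_l (V := CR) (fun s => s) t one K
                                    (is_derive_id t))]].
      intros s. unfold g. C_ext; ring.
    - C_ext; ring. }
  intros t. pose proof (zero_derive_const g Hg t 0) as E. unfold g in E.
  revert E. destruct (f t) as [p q], (f 0) as [p0 q0], K as [k1 k2].
  intros E. injection E. intros E2 E1. C_ext; lra.
Qed.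

Lemma bounded_const_derive (f : R -> C) (K : C) (M : R) :
  (forall t, is_derive (V := CR) f t K) -> (forall t, Cmod (f t) <= M) ->
  K = RtoC 0.
Proof.
  intros Hf HM.
  destruct (Req_dec (Cmod K) 0) as [h | h]; [now apply Cmod_eq_0 |].
  exfalso.
  assert (HK : 0 < Cmod K) by (pose proof (Cmod_ge_0 K); lra).
  assert (HM0 : 0 <= M) by (eapply Rle_trans; [apply Cmod_ge_0 | apply (HM 0)]).
  set (t := (2 * M + 1) / Cmod K).
  assert (Ht : t * Cmod K = 2 * M + 1) by (unfold t; field; lra).
  assert (E : Cmod (RtoC t * K) <= 2 * M).
  { replace (RtoC t * K)%C with (f t + - f 0)%C
      by (rewrite (const_derive_affine f K Hf t); ring).
    eapply Rle_trans; [apply Cmod_triangle |]. rewrite Cmod_opp.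
    pose proof (HM t); pose proof (HM 0); lra. }
  rewrite Cmod_mult, Cmod_R, Rabs_pos_eq in E; [lra |].
  unfold t; apply Rle_mult_inv_pos; lra.
Qed.

Definition kink (x _ : R) : R := Hk x.

Lemma cos_sin_2atan (t : R) :
  cos (2 * atan t) = (1 - t * t) / (1 + t * t) /\
  sin (2 * atan t) = 2 * t / (1 + t * t).
Proof.
  rewrite cos_2a, sin_2a, cos_atan, sin_atan.
  assert (Hp : 0 < 1 + t²) by (unfold Rsqr; nra).
  assert (Hs := sqrt_lt_R0 _ Hp).
  assert (Hss := sqrt_sqrt _ (Rlt_le _ _ Hp)).
  unfold Rsqr in *. set (s := sqrt (1 + t * t)) in *.
  replace (1 / s * (1 / s)) with (/ (s * s)) by (field; lra).
  replace (t / s * (t / s)) with (t * t / (s * s)) by (field; lra).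
  replace (2 * (t / s) * (1 / s)) with (2 * t / (s * s)) by (field; lra).
  rewrite Hss. split; field; lra.
Qed.

(* cos(4 atan t), sin(4 atan t) as rational functions of t; for t = e^x
   these are cos H(x) and sin H(x). *)
Lemma cos_sin_4atan (t : R) :
  cos (4 * atan t) = ((1 - t * t) * (1 - t * t) - 4 * t * t) / ((1 + t * t) * (1 + t * t)) /\
  sin (4 * atan t) = 4 * t * (1 - t * t) / ((1 + t * t) * (1 + t * t)).
Proof.
  replace (4 * atan t) with (2 * (2 * atan t)) by ring.
  rewrite (cos_2a (2 * atan t)), (sin_2a (2 * atan t)).
  destruct (cos_sin_2atan t) as [Hc Hs]. rewrite Hc, Hs.
  assert (Hp : 0 < 1 + t * t) by nra.
  split; field; lra.
Qed.

Lemma Derive_Hk (x : R) : Derive Hk x = 4 * exp x / (1 + exp x * exp x).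
Proof.
  apply is_derive_unique. unfold Hk. auto_derive; auto.
  field. assert (0 < exp x) by apply exp_pos. nra.
Qed.

Lemma dx_kink (x y : R) : dx kink x y = 4 * exp x / (1 + exp x * exp x).
Proof. exact (Derive_Hk x). Qed.

Lemma dy_kink (x y : R) : dy kink x y = 0.
Proof. unfold dy, kink. apply Derive_const. Qed.

(* At lambda = i the y-connection of the kink acts on v = (v1, v2) through the
   single combination w = v1 + e^x v2:  B v = (- e^x k w, k w), k = i 2e^x/(1+e^2x)^2. *)
Definition kink_coef (x : R) : C :=
  (0, 2 * exp x / ((1 + exp x * exp x) * (1 + exp x * exp x)))%R.

Lemma Bmat_kink (x y : R) (v : C * C) :
  mv (Bmat kink Ci x y) v =
  (kink_coef x * RtoC (- exp x) * (fst v + RtoC (exp x) * snd v),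
   kink_coef x * (fst v + RtoC (exp x) * snd v))%C.
Proof.
  unfold Bmat. rewrite dx_kink, dy_kink. unfold kink, Hk, kink_coef.
  destruct (cos_sin_4atan (exp x)) as [Hc Hs]. rewrite Hc, Hs.
  set (t := exp x). destruct v as [[a b] [c d]].
  assert (Ht : 0 < t) by apply exp_pos.
  assert (Hp : 0 < 1 + t * t) by nra.
  unfold mv, msc, madd, sigma1, sigma2, sigma3, mk. simpl.
  f_equal; C_ext; field; lra.
Qed.

Lemma Amat_kink_snd (x y : R) (v : C * C) :
  let t := exp x in
  snd (mv (Amat kink Ci x y) v) =
  (RtoC (2 * t * t * t / ((1 + t * t) * (1 + t * t))) * fst v
   + RtoC ((t * t - 1) * (t * t - 1) / (2 * ((1 + t * t) * (1 + t * t)))) * snd v)%C.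
Proof.
  intros t. unfold Amat. rewrite dx_kink, dy_kink. unfold kink, Hk.
  destruct (cos_sin_4atan (exp x)) as [Hc Hs]. rewrite Hc, Hs.
  fold t. destruct v as [[a b] [c d]].
  assert (Ht : 0 < t) by apply exp_pos.
  assert (Hp : 0 < 1 + t * t) by nra.
  unfold mv, msc, madd, sigma1, sigma2, sigma3, mk. simpl.
  C_ext; field; lra.
Qed.

Lemma exp_half_powers (x : R) :
  let a := exp (x / 2) in
  0 < a /\ exp x = a * a /\ exp (- x / 2) = / a /\
  exp (3 * x / 2) = a * a * a /\ exp (- x) = / (a * a).
Proof.
  intros a.
  assert (E : exp x = a * a) by (unfold a; rewrite <- exp_plus; f_equal; field).
  repeat split.
  - apply exp_pos.
  - exact E.
  - unfold a; rewrite <- exp_Ropp; f_equal; field.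
  - unfold a; rewrite <- !exp_plus; f_equal; field.
  - rewrite <- E, <- exp_Ropp; reflexivity.
Qed.

(* The weight m(x) = e^{3x/2} + e^{-x/2}; 1/m is the profile of the kink
   solution, and m v2 is conserved along x (see kink_x_profile). *)
Definition kink_weight (x : R) : R := exp (3 * x / 2) + exp (- x / 2).

Lemma kink_weight_pos (x : R) : 0 < kink_weight x.
Proof.
  unfold kink_weight. pose proof (exp_pos (3 * x / 2)). pose proof (exp_pos (- x / 2)). lra.
Qed.

Lemma Cexp_RtoC (r : R) : Cexp (RtoC r) = RtoC (exp r).
Proof. unfold Cexp. simpl. rewrite cos_0, sin_0. C_ext; ring. Qed.

Lemma Phi0_i (x y : R) :
  Phi0 Ci x y = mk (RtoC (exp (- x / 2))) 0 0 (RtoC (exp (x / 2))).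
Proof.
  unfold Phi0. f_equal; f_equal.
  - replace (Ci / 4 * Kf Ci * RtoC x - / 4 * Jf Ci * RtoC y)%C with (RtoC (- x / 2)).
    + apply Cexp_RtoC.
    + unfold Kf, Jf. C_ext; field.
  - replace (- (Ci / 4) * Kf Ci * RtoC x + / 4 * Jf Ci * RtoC y)%C with (RtoC (x / 2)).
    + apply Cexp_RtoC.
    + unfold Kf, Jf. C_ext; field.
Qed.

Lemma PhiH_i_cols (x y : R) :
  col false (PhiH Ci x y) = (RtoC (exp x / kink_weight x), RtoC (- / kink_weight x)) /\
  col true (PhiH Ci x y) = (RtoC (- exp x / kink_weight x), RtoC (/ kink_weight x)).
Proof.
  unfold PhiH, kink_weight. rewrite Phi0_i.
  destruct (exp_half_powers x) as (Ha & E1 & E2 & E3 & E4).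
  unfold Defs.tanh, Defs.sech. rewrite E1, E2, E3, E4.
  set (a := exp (x / 2)) in *.
  assert (Hq : 0 < a * a) by nra.
  assert (0 < / (a * a)) by (apply Rinv_0_lt_compat; lra).
  unfold mmul, madd, msc, sigma1, sigma3, Id2, mk, col. simpl.
  split; f_equal; C_ext; field; repeat split; nra.
Qed.

(* A weighted L^infinity bound makes each horizontal slice y |-> Phi(x, y)
   bounded; only this consequence of the growth hypothesis is needed. *)
Lemma Linf2_weighted_slice_bound (g : R -> R) (Phi : R -> R -> C * C) :
  Linf2 (fun x y => vsc (RtoC (exp (g x))) (Phi x y)) ->
  forall x, exists M, forall y, Cmod (snd (Phi x y)) <= M.
Proof.
  intros [M HM] x. exists (M / exp (g x)). intros y.
  destruct (HM x y) as [_ H2]. simpl in H2.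
  rewrite Cmod_mult, Cmod_R, Rabs_pos_eq in H2 by (apply Rlt_le, exp_pos).
  assert (0 < exp (g x)) by apply exp_pos.
  apply (Rmult_le_reg_l (exp (g x))); auto. field_simplify; lra.
Qed.

Lemma kink_y_derivatives (Phi : R -> R -> C * C) (x y : R) :
  parallel kink Ci Phi ->
  is_derive (V := CR) (fun s => 1 * fst (Phi x s) + RtoC (exp x) * snd (Phi x s))%C y zero /\
  is_derive (V := CR) (fun s => snd (Phi x s)) y
    (kink_coef x * (1 * fst (Phi x y) + RtoC (exp x) * snd (Phi x y)))%C.
Proof.
  intros Hpar. destruct (Hpar x y) as [_ HB].
  split.
  - eapply is_derive_eq; [apply (is_derive_Ccomb _ _ _ _ _ HB) |].
    rewrite Bmat_kink; simpl; C_ext; ring.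
  - eapply is_derive_eq; [apply (is_derive_snd _ _ _ HB) |].
    rewrite Bmat_kink; simpl; C_ext; ring.
Qed.

(* Bounded in y forces k w = 0, hence (k being nonzero) w = 0 and v2
   independent of y: on every vertical line, Phi = v2(x) (-e^x, 1). *)
Lemma kink_y_structure (Phi : R -> R -> C * C) (x M : R) :
  parallel kink Ci Phi -> (forall y, Cmod (snd (Phi x y)) <= M) ->
  forall y, fst (Phi x y) = (- RtoC (exp x) * snd (Phi x y))%C /\
            snd (Phi x y) = snd (Phi x 0).
Proof.
  intros Hpar HM.
  set (w := fun s => (1 * fst (Phi x s) + RtoC (exp x) * snd (Phi x s))%C).
  assert (Hw : forall s, w s = w 0).
  { intros s. apply zero_derive_const. intros t.
    exact (proj1 (kink_y_derivatives Phi x t Hpar)). }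
  assert (Hslope : (kink_coef x * w 0)%C = RtoC 0).
  { apply (bounded_const_derive (fun s => snd (Phi x s)) _ M); [| exact HM].
    intros t. rewrite <- (Hw t). exact (proj2 (kink_y_derivatives Phi x t Hpar)). }
  assert (Hw0 : w 0 = RtoC 0).
  { assert (Hk : kink_coef x <> RtoC 0).
    { unfold kink_coef. intros e. injection e. intros e2.
      assert (0 < exp x) by apply exp_pos.
      assert (0 < (1 + exp x * exp x) * (1 + exp x * exp x)) by nra.
      assert (0 < 2 * exp x / ((1 + exp x * exp x) * (1 + exp x * exp x)))
        by (apply Rdiv_lt_0_compat; nra).
      lra. }
    rewrite <- (Cmult_1_l (w 0)), <- (Cinv_l _ Hk), <- Cmult_assoc, Hslope.
    apply Cmult_0_r. }
  assert (Hv2 : forall s, snd (Phi x s) = snd (Phi x 0)).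
  { intros s. apply (zero_derive_const (V := CR) (fun s => snd (Phi x s))). intros t.
    eapply is_derive_eq; [exact (proj2 (kink_y_derivatives Phi x t Hpar)) |].
    fold (w t). rewrite Hw, Hw0. C_ext; ring. }
  intros y. split.
  - replace (fst (Phi x y)) with (w y - RtoC (exp x) * snd (Phi x y))%C
      by (unfold w; ring).
    rewrite Hw, Hw0. ring.
  - apply Hv2.
Qed.

(* On the line y = 0, once v1 = -e^x v2, the x-equation reduces to the
   scalar ODE v2' = -(m'/m) v2; hence m v2 is constant. *)
Lemma kink_x_profile (Phi : R -> R -> C * C) :
  parallel kink Ci Phi ->
  (forall x, fst (Phi x 0) = (- RtoC (exp x) * snd (Phi x 0))%C) ->
  forall x, (RtoC (kink_weight x) * snd (Phi x 0))%C =
            (RtoC (kink_weight 0) * snd (Phi 0 0))%C.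
Proof.
  intros Hpar Hfst x0.
  apply (zero_derive_const (V := CR) (fun t => RtoC (kink_weight t) * snd (Phi t 0))%C).
  intros x.
  assert (Hv2 := is_derive_snd _ _ _ (proj1 (Hpar x 0))).
  assert (Hm : is_derive kink_weight x (3 / 2 * exp (3 * x / 2) - / 2 * exp (- x / 2))).
  { unfold kink_weight. auto_derive; [auto | unfold Rdiv; ring]. }
  eapply is_derive_eq; [exact (is_derive_Rscal _ _ _ _ _ Hm Hv2) |].
  rewrite Amat_kink_snd, Hfst. unfold kink_weight.
  destruct (exp_half_powers x) as (Ha & E1 & E2 & E3 & _).
  rewrite E1, E2, E3. set (a := exp (x / 2)) in *.
  destruct (snd (Phi x 0)) as [p q].
  assert (0 < a * a) by nra.
  C_ext; field; nra.
Qed.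

Theorem corollary3p9 (Phi : R -> R -> C * C) :
  smooth2 Phi ->
  parallel (fun x _ => Hk x) Ci Phi ->
  (Linf2 (fun x y => vsc (RtoC (exp (- x / 2))) (Phi x y)) \/
   Linf2 (fun x y => vsc (RtoC (exp (x / 2))) (Phi x y))) ->
  (exists (c : C) (j : bool), forall x y : R,
      Phi x y = vsc c (col j (PhiH Ci x y))) /\
  (exists a b : C, (a, b) <> (RtoC 0, RtoC 0) /\ forall x y : R,
      vadd (vsc a (col false (PhiH Ci x y))) (vsc b (col true (PhiH Ci x y)))
      = (RtoC 0, RtoC 0)).
Proof.
  intros _ Hpar Hbd. change (parallel kink Ci Phi) in Hpar.
  assert (Hslice : forall x, exists M, forall y, Cmod (snd (Phi x y)) <= M).
  { destruct Hbd as [Hbd | Hbd].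
    - exact (Linf2_weighted_slice_bound (fun x => - x / 2) Phi Hbd).
    - exact (Linf2_weighted_slice_bound (fun x => x / 2) Phi Hbd). }
  assert (Hy : forall x y, fst (Phi x y) = (- RtoC (exp x) * snd (Phi x y))%C /\
                           snd (Phi x y) = snd (Phi x 0)).
  { intros x. destruct (Hslice x) as [M HM]. exact (kink_y_structure Phi x M Hpar HM). }
  assert (Hprof := kink_x_profile Phi Hpar (fun x => proj1 (Hy x 0))).
  set (q := (RtoC (kink_weight 0) * snd (Phi 0 0))%C) in Hprof.
  split.
  - exists (- q)%C, false. intros x y.
    destruct (Hy x y) as [H1 H2]. destruct (PhiH_i_cols x y) as [Hcol _].
    assert (Hm := kink_weight_pos x).
    assert (Hv2 : snd (Phi x y) = (RtoC (/ kink_weight x) * q)%C).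
    { rewrite H2, <- (Hprof x). destruct (snd (Phi x 0)) as [p r]. C_ext; field; lra. }
    rewrite (surjective_pairing (Phi x y)), H1, Hv2, Hcol.
    destruct q as [q1 q2]. unfold vsc; simpl. f_equal; C_ext; field; lra.
  - exists (RtoC 1), (RtoC 1). split.
    + intros e. injection e. lra.
    + intros x y. destruct (PhiH_i_cols x y) as [Hc1 Hc2]. rewrite Hc1, Hc2.
      assert (Hm := kink_weight_pos x).
      unfold vadd, vsc; simpl. f_equal; C_ext; field; lra.
Qed.
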